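(* Let $\sigma\in S_k$ be a $213$-avoiding permutation, i.e. there are no $1\le i_1<i_2<i_3\le k$ with $\sigma(i_2)<\sigma(i_1)<\sigma(i_3)$. Then there exists a strongly regular bi-sequence $\mathcal A$ of length $k$ such that $\sigma=\sigma_0(\mathcal A)$.
   Context: A bi-sequence of length $k$ is a pair $\mathcal A=\begin{pmatrix}a_1&\cdots&a_k\\ b_1&\cdots&b_k\end{pmatrix}$ of integer sequences with $a_1\le\cdots\le a_k$, $b_1\ge\cdots\ge b_k$, and $a_i\le b_{k+1-i}+1$ for all $i$. It is regular if the $a_i$ are pairwise distinct and the $b_i$ are pairwise distinct; it is strongly regular if it is regular and $\{a_1,\dots,a_k\}\cap\{b_1+1,\dots,b_k+1\}=\emptyset$. The permutation $\sigma_0(\mathcal A)\in S_k$ is defined recursively for $i=k,k-1,\dots,1$ by $\sigma_0^{-1}(i)=\max\{j\notin\sigma_0^{-1}(\{i+1,\dots,k\}) : a_j\le b_i+1\}$. *)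

(* Indices are 0-based: position i (1-based) is the ordinal i-1 : 'I_k. *)
From HB Require Import structures.
From mathcomp Require Import all_boot all_order all_algebra all_fingroup.
Set Implicit Arguments. Unset Strict Implicit. Unset Printing Implicit Defensive.
Import Order.TTheory GRing.Theory Num.Theory.
Local Open Scope ring_scope.

(* A bi-sequence of length k: a pair (a, b) of integer sequences indexed by 'I_k,
   a nondecreasing, b nonincreasing, and a_i <= b_{k+1-i} + 1 (1-based), i.e.
   a i <= b (rev_ord i) + 1 (0-based). *)
Definition bisequence (k : nat) (a b : 'I_k -> int) : Prop :=
  [/\ (forall i j : 'I_k, (i <= j)%N -> a i <= a j),
      (forall i j : 'I_k, (i <= j)%N -> b j <= b i) &
      (forall i : 'I_k, a i <= b (rev_ord i) + 1)].

Definition regular_bisequence (k : nat) (a b : 'I_k -> int) : Prop :=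
  [/\ bisequence a b, injective a & injective b].

Definition strongly_regular_bisequence (k : nat) (a b : 'I_k -> int) : Prop :=
  regular_bisequence a b /\ (forall i j : 'I_k, a i <> b j + 1).

(* sigma = sigma_0(a,b): for every i (processed from k down to 1),
   sigma^{-1}(i) is the maximum of
   { j | j not in sigma^{-1}({i+1,...,k}) and a_j <= b_i + 1 }. *)
Definition sigma0_set (k : nat) (a b : 'I_k -> int) (s : 'S_k) (i j : 'I_k) : Prop :=
  (forall i' : 'I_k, (i < i')%N -> (s^-1)%g i' <> j) /\ a j <= b i + 1.

Definition is_sigma0 (k : nat) (a b : 'I_k -> int) (s : 'S_k) : Prop :=
  forall i : 'I_k,
    sigma0_set a b s i ((s^-1)%g i) /\
    (forall j : 'I_k, sigma0_set a b s i j -> (j <= (s^-1)%g i)%N).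

Definition avoids213 (k : nat) (s : 'S_k) : Prop :=
  ~ exists i1 i2 i3 : 'I_k,
      [/\ (i1 < i2)%N, (i2 < i3)%N, (s i2 < s i1)%N & (s i1 < s i3)%N].

From mathcomp Require Import all_boot all_order all_algebra all_fingroup.
From mathcomp Require Import zify.
Import Order.TTheory GRing.Theory Num.Theory.

Set Implicit Arguments.
Unset Strict Implicit.
Unset Printing Implicit Defensive.

(* Let M(i) be the largest position s^-1(i') with i' >= i.  Taking a_j := (k+1) j
   and b_i + 1 := (k+1) M(i) + (k - i), the condition a_j <= b_i + 1 says exactly
   j <= M(i), while the residue k - i of b_i + 1 modulo k+1 lies in [1, k] and makes
   b strictly decreasing and never equal to a_j - 1.  The greedy rule computing
   sigma_0 then picks, at value i, the rightmost free position j <= M(i); if that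
   position were to the right of s^-1(i), then s^-1(i) < j < s^-1(q) (where
   M(i) = s^-1(q)) would carry the values i > s(j) and q > i: a 213 pattern. *)

Lemma card_ord_geq (k n : nat) : #|[pred j : 'I_k | n <= j]| = k - n.
Proof.
by rewrite -sum1_card -[RHS]muln1 -sum_nat_const_nat big_geq_mkord; apply: eq_bigl.
Qed.

Lemma card_ord_leq (k m : nat) : #|[pred j : 'I_k | j <= m]| <= m.+1.
Proof.
have := cardC [pred j : 'I_k | m < j]; rewrite card_ord card_ord_geq.
have -> : #|[predC [pred j : 'I_k | m < j]]| = #|[pred j : 'I_k | j <= m]|.
  by apply: eq_card => j; rewrite !inE -leqNgt.
lia.
Qed.

Lemma leq_mul_addr_digit {q r : nat} (m n : nat) : r < q -> (q * m <= q * n + r) = (m <= n).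
Proof.
move=> ltrq; apply/idP/idP => [le_qm | lemn].
  rewrite leqNgt; apply/negP => ltnm.
  have : q * n.+1 <= q * m by rewrite leq_mul2l ltnm orbT.
  rewrite mulnS; lia.
by rewrite (leq_trans _ (leq_addr r _)) // leq_mul2l lemn orbT.
Qed.

Lemma mul_neq_addr_digit (q m n r : nat) : 0 < r < q -> q * m != q * n + r.
Proof.
case/andP=> r_gt0 ltrq; apply/eqP => eqm.
have lemn : m <= n by rewrite -(leq_mul_addr_digit m n ltrq) eqm.
have : q * m <= q * n by rewrite leq_mul2l lemn orbT.
by rewrite eqm; lia.
Qed.

Section SuffixMax.
Variables (k : nat) (s : 'S_k).

Definition suffix_max (i : 'I_k) : nat := \max_(i' : 'I_k | i <= i') (s^-1)%g i'.

Lemma leq_suffix_max (i i' : 'I_k) : i <= i' -> (s^-1)%g i' <= suffix_max i.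
Proof. exact: (leq_bigmax_cond (P := fun x : 'I_k => i <= x)). Qed.

Lemma suffix_max_nonincr (i j : 'I_k) : i <= j -> suffix_max j <= suffix_max i.
Proof.
by move=> leij; apply/bigmax_leqP => i' /(leq_trans leij); apply: leq_suffix_max.
Qed.

Lemma suffix_max_attained (i : 'I_k) :
  exists2 q : 'I_k, i <= q & suffix_max i = (s^-1)%g q.
Proof.
rewrite /suffix_max (bigop.bigmax_eq_arg i) //.
by case: arg_maxnP => // q leiq _; exists q.
Qed.

Lemma card_suffix_leq_max (i : 'I_k) : k - i <= (suffix_max i).+1.
Proof.
rewrite -card_ord_geq -(card_imset _ (@perm_inj _ (s^-1)%g)).
apply: leq_trans (card_ord_leq k (suffix_max i)); apply: subset_leq_card.
by apply/subsetP => _ /imsetP [i' leii' ->]; rewrite inE leq_suffix_max.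
Qed.

Definition code_a (j : 'I_k) : int := Posz (k.+1 * j).
Definition code_b_succ (i : 'I_k) : nat := k.+1 * suffix_max i + (k - i).
Definition code_b (i : 'I_k) : int := (Posz (code_b_succ i) - 1)%R.

Lemma code_digit_range (i : 'I_k) : 0 < k - i < k.+1.
Proof. by rewrite subn_gt0 ltn_ord ltnS leq_subr. Qed.

Lemma leq_code_ab (i j : 'I_k) : (code_a j <= code_b i + 1)%R = (j <= suffix_max i).
Proof.
rewrite /code_b subrK lez_nat; apply: leq_mul_addr_digit.
by case/andP: (code_digit_range i).
Qed.

Lemma code_b_succ_decr (i j : 'I_k) : i < j -> code_b_succ j < code_b_succ i.
Proof.
move=> ltij; have : k.+1 * suffix_max j <= k.+1 * suffix_max i.
  by rewrite leq_mul2l suffix_max_nonincr ?orbT // ltnW.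
by rewrite /code_b_succ; move: (ltn_ord j); lia.
Qed.

Lemma code_strongly_regular : strongly_regular_bisequence code_a code_b.
Proof.
split; first split; first split.
- by move=> i j leij; rewrite lez_nat leq_mul2l leij orbT.
- move=> i j; rewrite leq_eqVlt => /orP [/eqP/val_inj -> // | /code_b_succ_decr ltb].
  by rewrite lerD2r lez_nat ltnW.
- move=> i; rewrite leq_code_ab.
  by move: (card_suffix_leq_max (rev_ord i)) (ltn_ord i) => /=; lia.
- by move=> i j [/eqP]; rewrite eqn_mul2l /= => /eqP/val_inj.
- move=> i j /addIr [] eqb.
  by case: (ltngtP i j) => [/code_b_succ_decr | /code_b_succ_decr | /val_inj //];
    rewrite eqb ltnn.
- move=> i j; rewrite subrK => -[] /eqP; apply/negP.
  exact/mul_neq_addr_digit/code_digit_range.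
Qed.

Hypothesis s_avoids213 : avoids213 s.

Lemma free_leq_suffix_max_left (i j : 'I_k) :
  j <= suffix_max i -> (forall i' : 'I_k, i < i' -> (s^-1)%g i' <> j) ->
  j <= (s^-1)%g i.
Proof.
move=> lejM j_free; rewrite leqNgt; apply/negP => ltij.
have ltsji : s j < i.
  rewrite ltn_neqAle; apply/andP; split.
    by apply: contraTneq ltij => /val_inj <-; rewrite permK ltnn.
  by rewrite leqNgt; apply/negP => /(j_free (s j)); rewrite permK.
have [q leiq Mq] := suffix_max_attained i.
have ltiq : i < q.
  rewrite ltn_neqAle leiq andbT; apply: contraTneq ltij => /val_inj eqiq.
  by rewrite -leqNgt eqiq -Mq.
have ltjq : j < (s^-1)%g q.
  rewrite ltn_neqAle -Mq lejM andbT Mq.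
  by apply/eqP => /val_inj eqj; apply: (j_free q ltiq); rewrite eqj.
by apply: s_avoids213; exists ((s^-1)%g i), j, ((s^-1)%g q); rewrite !permKV.
Qed.

Lemma is_sigma0_suffix_max (a b : 'I_k -> int) :
  (forall i j : 'I_k, (a j <= b i + 1)%R = (j <= suffix_max i)) -> is_sigma0 a b s.
Proof.
move=> abM i; split.
  split; first by move=> i' ltii' /perm_inj eqi; move: ltii'; rewrite eqi ltnn.
  by rewrite abM leq_suffix_max.
by move=> j [j_free]; rewrite abM => lejM; apply: free_leq_suffix_max_left.
Qed.

End SuffixMax.

Theorem mainTheorem3 (k : nat) (s : 'S_k) :
  avoids213 s ->
  exists a b : 'I_k -> int, strongly_regular_bisequence a b /\ is_sigma0 a b s.
Proof.
move=> s_avoids213; exists (@code_a k), (code_b s); split.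
  exact: code_strongly_regular.
exact: is_sigma0_suffix_max (leq_code_ab s).
Qed.
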